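(* Let $L$ be a pentagonal linkage and $X_k=\{P\in\overline{M^C}(L): |A_3A_5|=k\}$ a slice. On the relative interior of $X_k$, parameterize the slice by $x_2$ and denote by a prime the derivative $d/dx_2$. Then $$(-x_1)'=\frac{S_{125}}{S_{123}}\cdot\frac{S_{235}}{S_{135}},\qquad (-x_3)'=\frac{S_{234}}{S_{135}}\cdot\frac{S_{125}}{S_{123}},\qquad (x_5)'=\frac{S_{145}}{S_{135}}.$$
   Context: A pentagonal linkage $L$ is given by side lengths $a_1,\dots,a_5>0$; $M(L)$ is the set of planar 5-gons $(A_1,\dots,A_5)$ with $|A_iA_{i+1}|=a_i$ (indices mod 5) modulo all isometries of $\mathbb{R}^2$; $M^C(L)$ is the set of strictly convex configurations (convex pentagon $A_1\dots A_5$ in this cyclic order, no angle equal to $\pi$) and $\overline{M^C}(L)$ its closure. $b_i=|A_{i-1}A_{i+1}|$, $x_i=b_i^2$ (indices mod 5); on a slice $x_4=k^2$ is fixed and $x_1,x_3,x_5$ are functions of $x_2$. $S_{ijk}$ is the oriented area of triangle $A_iA_jA_k$ with respect to a fixed orientation of the plane. *)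

From Stdlib Require Import Reals Lra Arith.
From Coquelicot Require Import Coquelicot.
Open Scope R_scope.

Definition pt : Type := (R * R)%type.

Definition edist (P Q : pt) : R :=
  sqrt ((fst P - fst Q) ^ 2 + (snd P - snd Q) ^ 2).

Definition oarea (P Q T : pt) : R :=
  ((fst Q - fst P) * (snd T - snd P) - (fst T - fst P) * (snd Q - snd P)) / 2.

(* A configuration (planar 5-gon) is a map C : nat -> pt; the vertex A_i is
   C (i mod 5), so indices are taken mod 5 (A_5 = A_0). *)
Definition config : Type := nat -> pt.
Definition V (C : config) (i : nat) : pt := C (i mod 5).

Definition realizes (a : nat -> R) (C : config) : Prop :=
  forall i : nat, (1 <= i <= 5)%nat -> edist (V C i) (V C (S i)) = a i.

Definition strictly_convex (C : config) : Prop :=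
  (forall i j : nat, (1 <= i <= 5)%nat -> (1 <= j <= 5)%nat ->
     j mod 5 <> i mod 5 -> j mod 5 <> (S i) mod 5 ->
     0 < oarea (V C i) (V C (S i)) (V C j))
  \/
  (forall i j : nat, (1 <= i <= 5)%nat -> (1 <= j <= 5)%nat ->
     j mod 5 <> i mod 5 -> j mod 5 <> (S i) mod 5 ->
     oarea (V C i) (V C (S i)) (V C j) < 0).

(* x_i = b_i^2 = |A_{i-1} A_{i+1}|^2. *)
Definition xsq (C : config) (i : nat) : R :=
  edist (V C (i + 4)) (V C (S i)) ^ 2.

Definition Sa (C : config) (i j k : nat) : R := oarea (V C i) (V C j) (V C k).

(* Move the pentagon along the slice and let [sqdist_rate C W i j] be the rate
   of change of |A_iA_j|^2.  The five sides and the diagonal A_3A_5 are rigid, so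
   their rates vanish.  Any four points of the plane carry a self-stress: the six
   rates of their mutual squared distances satisfy one linear relation whose
   coefficients are products of oriented areas.  Applied to the quadruples
   1235, 2345 and 1345, where four of the six rates vanish, it links two free
   rates each time, and solving for x_1', x_3', x_5' in terms of x_2' gives the
   three formulas. *)
From Stdlib Require Import Reals Lra Lia.
From Coquelicot Require Import Coquelicot.
Open Scope R_scope.

Lemma edist_sq (P Q : pt) :
  edist P Q ^ 2 = (fst P - fst Q) ^ 2 + (snd P - snd Q) ^ 2.
Proof.
  unfold edist; rewrite pow2_sqrt; [reflexivity|].
  apply Rplus_le_le_0_compat; apply pow2_ge_0.
Qed.

Lemma Derive_sum_sq_diff (f1 f2 g1 g2 : R -> R) (t : R) :
  ex_derive f1 t -> ex_derive f2 t -> ex_derive g1 t -> ex_derive g2 t ->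
  Derive (fun s => (f1 s - f2 s) ^ 2 + (g1 s - g2 s) ^ 2) t =
  2 * ((f1 t - f2 t) * (Derive f1 t - Derive f2 t) +
       (g1 t - g2 t) * (Derive g1 t - Derive g2 t)).
Proof.
  intros. apply is_derive_unique; auto_derive; [tauto|].
  change (fun x => f1 x) with f1; change (fun x => f2 x) with f2.
  change (fun x => g1 x) with g1; change (fun x => g2 x) with g2.
  ring.
Qed.

Lemma Derive_const_on (f : R -> R) (c lo hi t : R) :
  lo < t < hi -> (forall s, lo < s < hi -> f s = c) -> Derive f t = 0.
Proof.
  intros Ht Hf.
  rewrite (Derive_ext_loc f (fun _ => c)); [apply Derive_const|].
  apply (filter_imp (fun s => lo < s < hi)); [exact Hf|].
  apply (open_and _ _ (open_gt lo) (open_lt hi)); exact Ht.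
Qed.

Definition velocity (gamma : R -> config) (t : R) : config :=
  fun i => (Derive (fun s => fst (gamma s i)) t, Derive (fun s => snd (gamma s i)) t).

Definition sqdist_rate (C W : config) (i j : nat) : R :=
  2 * ((fst (V C i) - fst (V C j)) * (fst (V W i) - fst (V W j)) +
       (snd (V C i) - snd (V C j)) * (snd (V W i) - snd (V W j))).

Lemma Derive_edist_sq (gamma : R -> config) (t : R) (i j : nat) :
  (forall n, ex_derive (fun s => fst (gamma s n)) t /\
             ex_derive (fun s => snd (gamma s n)) t) ->
  Derive (fun s => edist (V (gamma s) i) (V (gamma s) j) ^ 2) t =
  sqdist_rate (gamma t) (velocity gamma t) i j.
Proof.
  intro Hd. rewrite (Derive_ext _ _ _ (fun s => edist_sq _ _)).
  destruct (Hd (i mod 5)), (Hd (j mod 5)).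
  exact (Derive_sum_sq_diff (fun s => fst (gamma s (i mod 5))) (fun s => fst (gamma s (j mod 5)))
           (fun s => snd (gamma s (i mod 5))) (fun s => snd (gamma s (j mod 5))) t
           ltac:(assumption) ltac:(assumption) ltac:(assumption) ltac:(assumption)).
Qed.

Lemma sqdist_rate_rigid (gamma : R -> config) (lo hi t c : R) (i j : nat) :
  lo < t < hi ->
  (forall n, ex_derive (fun s => fst (gamma s n)) t /\
             ex_derive (fun s => snd (gamma s n)) t) ->
  (forall s, lo < s < hi -> edist (V (gamma s) i) (V (gamma s) j) = c) ->
  sqdist_rate (gamma t) (velocity gamma t) i j = 0.
Proof.
  intros Ht Hd Hc.
  rewrite <- (Derive_edist_sq gamma t i j Hd).
  apply (Derive_const_on _ (c ^ 2) lo hi t Ht).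
  intros s Hs; rewrite Hc by exact Hs; reflexivity.
Qed.

Lemma sqdist_rate_sym (C W : config) (i j : nat) :
  sqdist_rate C W i j = sqdist_rate C W j i.
Proof. unfold sqdist_rate; ring. Qed.

Lemma Sa_swap12 (C : config) (i j k : nat) : Sa C j i k = - Sa C i j k.
Proof. unfold Sa, oarea; field. Qed.

Lemma Sa_rot (C : config) (i j k : nat) : Sa C j k i = Sa C i j k.
Proof. unfold Sa, oarea; field. Qed.

Lemma four_point_stress (C W : config) (i j k l : nat) :
  Sa C i k l * Sa C j k l * sqdist_rate C W i j +
  Sa C i j l * Sa C k j l * sqdist_rate C W i k +
  Sa C i j k * Sa C l j k * sqdist_rate C W i l +
  Sa C j i l * Sa C k i l * sqdist_rate C W j k +
  Sa C j i k * Sa C l i k * sqdist_rate C W j l +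
  Sa C k i j * Sa C l i j * sqdist_rate C W k l = 0.
Proof. unfold Sa, oarea, sqdist_rate; field. Qed.

Lemma solve_linear (a b x y : R) : b <> 0 -> a * x + b * y = 0 -> y = - a / b * x.
Proof.
  intros Hb H. replace y with (b * y / b) by (field; exact Hb).
  replace (b * y) with (- (a * x)) by lra. field; exact Hb.
Qed.

Lemma pentagon_flex_rates (C W : config) :
  sqdist_rate C W 1 2 = 0 -> sqdist_rate C W 2 3 = 0 -> sqdist_rate C W 3 4 = 0 ->
  sqdist_rate C W 4 5 = 0 -> sqdist_rate C W 5 1 = 0 -> sqdist_rate C W 3 5 = 0 ->
  Sa C 1 2 3 <> 0 -> Sa C 1 3 5 <> 0 -> Sa C 2 3 5 <> 0 -> Sa C 3 4 5 <> 0 ->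
  - sqdist_rate C W 5 2 =
    Sa C 1 2 5 / Sa C 1 2 3 * (Sa C 2 3 5 / Sa C 1 3 5) * sqdist_rate C W 1 3
  /\ - sqdist_rate C W 2 4 =
    Sa C 2 3 4 / Sa C 1 3 5 * (Sa C 1 2 5 / Sa C 1 2 3) * sqdist_rate C W 1 3
  /\ sqdist_rate C W 4 1 = Sa C 1 4 5 / Sa C 1 3 5 * sqdist_rate C W 1 3.
Proof.
  intros R12 R23 R34 R45 R51 R35 N123 N135 N235 N345.
  rewrite sqdist_rate_sym in R51.
  assert (E25 : sqdist_rate C W 2 5 =
                - (Sa C 1 2 5 * - Sa C 2 3 5) / (- Sa C 1 2 3 * Sa C 1 3 5) * sqdist_rate C W 1 3).
  { apply solve_linear; [apply Rmult_integral_contrapositive; split; lra|].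
    pose proof (four_point_stress C W 1 2 3 5) as Stress.
    rewrite R12, R51, R23, R35, (Sa_swap12 C 2 3 5), (Sa_swap12 C 1 2 3), <- (Sa_rot C 5 1 3)
      in Stress.
    lra. }
  assert (E24 : sqdist_rate C W 2 4 =
                - (Sa C 2 3 4 * Sa C 3 4 5) / (Sa C 2 3 5 * - Sa C 3 4 5) * sqdist_rate C W 2 5).
  { apply solve_linear; [apply Rmult_integral_contrapositive; split; lra|].
    pose proof (four_point_stress C W 2 3 4 5) as Stress.
    rewrite R23, R34, R35, R45, (Sa_swap12 C 3 4 5), <- (Sa_rot C 5 3 4) in Stress.
    lra. }
  assert (E14 : sqdist_rate C W 1 4 =
                - (Sa C 1 4 5 * Sa C 3 4 5) / (Sa C 1 3 5 * - Sa C 3 4 5) * sqdist_rate C W 1 3).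
  { apply solve_linear; [apply Rmult_integral_contrapositive; split; lra|].
    pose proof (four_point_stress C W 1 3 4 5) as Stress.
    rewrite R51, R34, R35, R45, (Sa_swap12 C 3 4 5) in Stress.
    lra. }
  rewrite (sqdist_rate_sym C W 5 2), (sqdist_rate_sym C W 4 1), E24, E25, E14.
  repeat split; field; auto.
Qed.

Lemma strictly_convex_Sa_neq0 (C : config) (i j : nat) :
  strictly_convex C -> (1 <= i <= 5)%nat -> (1 <= j <= 5)%nat ->
  j mod 5 <> i mod 5 -> j mod 5 <> S i mod 5 -> Sa C i (S i) j <> 0.
Proof.
  intros [Hpos | Hneg] Hi Hj Hji HjSi; unfold Sa.
  - specialize (Hpos i j Hi Hj Hji HjSi); lra.
  - specialize (Hneg i j Hi Hj Hji HjSi); lra.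
Qed.

Theorem lemma4 (a : nat -> R) (k : R) (gamma : R -> config) (lo hi : R) :
  (forall i : nat, (1 <= i <= 5)%nat -> 0 < a i) ->
  (forall t, lo < t < hi ->
     realizes a (gamma t) /\ strictly_convex (gamma t) /\
     edist (V (gamma t) 3) (V (gamma t) 5) = k) ->
  (forall t, lo < t < hi -> forall i : nat,
     ex_derive (fun s => fst (gamma s i)) t /\
     ex_derive (fun s => snd (gamma s i)) t) ->
  forall t, lo < t < hi ->
    Derive (fun s => - xsq (gamma s) 1) t =
      (Sa (gamma t) 1 2 5 / Sa (gamma t) 1 2 3) *
      (Sa (gamma t) 2 3 5 / Sa (gamma t) 1 3 5) *
      Derive (fun s => xsq (gamma s) 2) t
    /\
    Derive (fun s => - xsq (gamma s) 3) t =
      (Sa (gamma t) 2 3 4 / Sa (gamma t) 1 3 5) *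
      (Sa (gamma t) 1 2 5 / Sa (gamma t) 1 2 3) *
      Derive (fun s => xsq (gamma s) 2) t
    /\
    Derive (fun s => xsq (gamma s) 5) t =
      (Sa (gamma t) 1 4 5 / Sa (gamma t) 1 3 5) *
      Derive (fun s => xsq (gamma s) 2) t.
Proof.
  intros _ Hslice Hderiv t Ht.
  set (C := gamma t). set (W := velocity gamma t).
  assert (Hd := Hderiv t Ht).
  assert (Rside : forall i, (1 <= i <= 5)%nat -> sqdist_rate C W i (S i) = 0).
  { intros i Hi. apply (sqdist_rate_rigid gamma lo hi t (a i)); [exact Ht|exact Hd|].
    intros s Hs. destruct (Hslice s Hs) as [Hreal _]. exact (Hreal i Hi). }
  assert (R35 : sqdist_rate C W 3 5 = 0).
  { apply (sqdist_rate_rigid gamma lo hi t k); [exact Ht|exact Hd|].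
    intros s Hs. apply (Hslice s Hs). }
  destruct (Hslice t Ht) as [_ [Hconv _]].
  unfold xsq; rewrite !Derive_opp, !Derive_edist_sq by exact Hd.
  (* [V] reads indices mod 5: [Rside 5] is the rate of the pair (5, 1), and the
     index pairs produced by [xsq] match those of [pentagon_flex_rates]. *)
  apply (pentagon_flex_rates C W (Rside 1%nat ltac:(lia)) (Rside 2%nat ltac:(lia))
           (Rside 3%nat ltac:(lia)) (Rside 4%nat ltac:(lia)) (Rside 5%nat ltac:(lia)) R35).
  - apply strictly_convex_Sa_neq0; (exact Hconv || lia || discriminate).
  - rewrite (Sa_rot C 5 1 3).
    exact (strictly_convex_Sa_neq0 C 5 3 Hconv ltac:(lia) ltac:(lia)
             ltac:(discriminate) ltac:(discriminate)).
  - apply strictly_convex_Sa_neq0; (exact Hconv || lia || discriminate).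
  - apply strictly_convex_Sa_neq0; (exact Hconv || lia || discriminate).
Qed.
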